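(* Let $n\ge1$, $0<\delta\le1/3$, $b=\delta n$ (a positive integer), $B=2^b$, $\eta>0$ with $B=\eta K$, and let $C\ge3$ be an integer with $Cb\le n$. Let $\mathcal{K}$ consist of $K$ indices chosen independently and uniformly at random from $\mathbb{F}_2^n$, and form the bipartite graph with left nodes $\mathcal{K}$, right nodes $\{(c,\mathbf{j}):c\in[C],\mathbf{j}\in\mathbb{F}_2^b\}$, and an edge between $\mathbf{k}$ and $(c,\mathcal{H}_c(\mathbf{k}))$ for each $c\in[C]$, where $\mathcal{H}_c(\mathbf{k})=(k[(c-1)b+1],\dots,k[cb])$. Then there is a sufficiently small constant $\varepsilon>0$ such that, with probability at least $1-O(1/K)$, this graph is an $(\varepsilon,1/2,C)$-expander.
   Context: A $C$-regular bipartite graph with $K$ left nodes and $C$ groups of $B=\eta K$ right nodes is an $(\varepsilon,1/2,C)$-expander if for every subset $\mathcal{S}$ of left nodes with $|\mathcal{S}|\le\varepsilon K$ there exists a group $c\in[C]$ such that the set $\mathcal{N}_c(\mathcal{S})$ of right nodes in group $c$ adjacent to $\mathcal{S}$ satisfies $|\mathcal{N}_c(\mathcal{S})|>|\mathcal{S}|/2$. Here $[C]=\{1,\dots,C\}$ and $\mathbf{k}=[k[1],\dots,k[n]]^T$. *)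

From HB Require Import structures.
From mathcomp Require Import all_boot all_order all_algebra.
Set Implicit Arguments. Unset Strict Implicit. Unset Printing Implicit Defensive.
Import Order.TTheory GRing.Theory Num.Theory.
Local Open Scope ring_scope.

(* An index k in F_2^n is an n-tuple of bits; entry k[i] (1-indexed in the
   paper) is nth false k (i-1).  Groups c in [C] are 0-indexed: c : 'I_C. *)

(* H_c(k) = (k[c b + 1], ..., k[(c+1) b])   (paper's c-1 is our c) *)
Definition hashc (n b : nat) (c : nat) (k : n.-tuple bool) : b.-tuple bool :=
  [tuple nth false k (c * b + j) | j < b].

Definition nbr (n b K : nat) (ks : {ffun 'I_K -> n.-tuple bool}) (c : nat)
    (S : {set 'I_K}) : {set b.-tuple bool} :=
  [set hashc b c (ks i) | i in S].

Definition is_expander (R : realFieldType) (n b K C : nat) (eps : R)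
    (ks : {ffun 'I_K -> n.-tuple bool}) : bool :=
  [forall S : {set 'I_K},
     ((S != set0) && (#|S|%:R <= eps * K%:R))
       ==> [exists c : 'I_C, (#|S| < 2 * #|nbr b ks c S|)%N]].

Definition prob_expander (R : realFieldType) (n b K C : nat) (eps : R) : R :=
  #|[set ks : {ffun 'I_K -> n.-tuple bool} | is_expander b C eps ks]|%:R
  / #|{ffun 'I_K -> n.-tuple bool}|%:R.

(* If a set S of s <= eps K left nodes does not expand, then in each of the
   first three groups its hashes take at most t = s/2 values, i.e. they lie in
   some t-subset of F_2^b.  A union bound over S and over these three subsets
   bounds the probability of this event by C(K,s) C(B,t)^3 (t/B)^(3s).  With
   eps = eta^3/4096 we have 4096 s K^2 <= B^3, and then the term is at most
   1024 K^2 / (2^s B^3); summing over s gives 2048 K^2 / B^3 = 2048 / (eta^3 K). *)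

From HB Require Import structures.
From mathcomp Require Import all_boot all_order all_algebra.
From mathcomp Require Import zify ring.
Import Order.TTheory GRing.Theory Num.Theory.

Set Implicit Arguments.
Unset Strict Implicit.
Unset Printing Implicit Defensive.

Lemma leq_expn2r m n e : m <= n -> m ^ e <= n ^ e.
Proof. by move=> le_mn; elim: e => // e IH; rewrite !expnS leq_mul. Qed.

Lemma ffact_leq_expn n k : n ^_ k <= n ^ k.
Proof.
elim: k n => // k IH n; rewrite ffactnS expnS leq_mul //.
exact: leq_trans (IH _) (leq_expn2r _ (leq_pred n)).
Qed.

Lemma expn_leq_ffact m k : m ^ k <= (m + k) ^_ k.
Proof.
by elim: k => // k IH; rewrite addnS ffactSS expnS leq_mul // ltnW // ltnS leq_addr.
Qed.

Lemma bin_leq_exp2 n k : 'C(n, k) <= 2 ^ n.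
Proof.
rewrite -[n in 'C(n, _)]card_ord -card_draws -[n in 2 ^ n]card_ord -cardsT -card_powerset.
by apply: subset_leq_card; apply/subsetP => A _; rewrite powersetE subsetT.
Qed.

Lemma expn_self_leq_fact n : n ^ n <= 4 ^ n * n`!.
Proof.
rewrite -[4]/(2 ^ 2) -expnM mul2n -addnn.
apply: leq_trans (expn_leq_ffact n n) _.
by rewrite -bin_ffact leq_mul2r bin_leq_exp2 orbT.
Qed.

Lemma bin_mul_expn_self n k : 'C(n, k) * k ^ k <= 4 ^ k * n ^ k.
Proof.
apply: leq_trans (leq_mul (leqnn _) (expn_self_leq_fact k)) _.
by rewrite mulnCA bin_ffact leq_mul2l ffact_leq_expn orbT.
Qed.

Lemma bin_mul_expn_sum B t u : t <= u ->
  'C(B, t) * t ^ (t + u) <= (2 * (t + u)) ^ u * B ^ t.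
Proof.
move=> tu.
have h4 : 4 ^ t * t ^ u <= (2 * (t + u)) ^ u.
  apply: leq_trans (leq_mul (leq_pexp2l _ tu) (leqnn _)) _ => //.
  by rewrite -expnMn leq_expn2r //; lia.
rewrite expnD mulnA; apply: leq_trans (leq_mul (bin_mul_expn_self B t) (leqnn _)) _.
by rewrite mulnAC leq_mul2r h4 orbT.
Qed.

Lemma bin_mul_expn_double K s u : s <= 2 * u -> s <= K ->
  'C(K, s) * s ^ (2 * u) <= 16 ^ u * K ^ (2 * u).
Proof.
move=> su sK; rewrite -(subnKC su) !expnD mulnA.
apply: leq_trans (leq_mul (bin_mul_expn_self K s) (leq_expn2r _ sK)) _.
by rewrite -mulnA leq_mul2r -[16]/(4 ^ 2) -expnM leq_pexp2l ?orbT.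
Qed.

Lemma mul_exp2_leq s w : s <= 2 * w.+1 -> s * 2 ^ s <= 8 * 32 ^ w.
Proof.
move=> sw; apply: leq_trans (leq_mul sw (leq_pexp2l (isT : 0 < 2) sw)) _.
have w8 : w.+1 <= 8 ^ w.
  exact: leq_trans (ltn_expl w (isT : 1 < 2)) (leq_expn2r _ (isT : 2 <= 8)).
rewrite mulnS expnD expnM -[2 ^ 2]/4 -[32]/(4 * 8) expnMn.
have := leq_mul (leqnn (4 ^ w)) w8; nia.
Qed.

Lemma leq_expn_gain K B s u : 0 < u -> s <= 2 * u -> 4096 * s * K ^ 2 <= B ^ 3 ->
  (128 * s * K ^ 2) ^ u * 2 ^ s * B ^ 3 <= 1024 * K ^ 2 * B ^ (3 * u).
Proof.
case: u => // w _ sw hB.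
have hw : 32 ^ w * (128 * s * K ^ 2) ^ w <= (B ^ 3) ^ w.
  by rewrite -expnMn leq_expn2r //; lia.
have hs := mul_exp2_leq sw.
rewrite -(leq_pmul2l (expn_gt0 32 w)) mulnS expnD expnM.
have -> : 32 ^ w * ((128 * s * K ^ 2) ^ w.+1 * 2 ^ s * B ^ 3)
        = (128 * K ^ 2 * B ^ 3) * (s * 2 ^ s) * (32 ^ w * (128 * s * K ^ 2) ^ w).
  by rewrite expnS; ring.
have -> : 32 ^ w * (1024 * K ^ 2 * (B ^ 3 * (B ^ 3) ^ w))
        = (128 * K ^ 2 * B ^ 3) * (8 * 32 ^ w) * (B ^ 3) ^ w by ring.
by rewrite leq_mul // leq_mul.
Qed.

Lemma union_term_leq K B s : 0 < s -> s <= K -> 4096 * s * K ^ 2 <= B ^ 3 ->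
  'C(K, s) * ('C(B, s./2) * s./2 ^ s) ^ 3 * 2 ^ s * B ^ 3 <= 1024 * K ^ 2 * B ^ (3 * s).
Proof.
move=> s0 sK hB; set t := s./2; set u := uphalf s.
have [es tu su u0] : [/\ s = t + u, t <= u, s <= 2 * u & 0 < u].
  have := odd_double_half s; have := uphalf_half s; rewrite /t /u -mul2n.
  by case: (odd s) => /= ? ?; split; lia.
have hBt : ('C(B, t) * t ^ s) ^ 3 <= (2 * s) ^ (3 * u) * B ^ (3 * t).
  by rewrite !(mulnC 3) !expnM -expnMn leq_expn2r // es bin_mul_expn_sum.
have eK : 16 ^ u * K ^ (2 * u) * (2 * s) ^ (3 * u) = (128 * s * K ^ 2) ^ u * s ^ (2 * u).
  by rewrite !expnM -!expnMn; congr (_ ^ _); ring.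
rewrite -(leq_pmul2r (_ : 0 < s ^ (2 * u))); last by rewrite expn_gt0 s0.
apply: (@leq_trans (('C(K, s) * s ^ (2 * u)) * ('C(B, t) * t ^ s) ^ 3 * (2 ^ s * B ^ 3))).
  by apply: eq_leq; ring.
apply: leq_trans (leq_mul (leq_mul (bin_mul_expn_double su sK) hBt) (leqnn _)) _.
have -> : 16 ^ u * K ^ (2 * u) * ((2 * s) ^ (3 * u) * B ^ (3 * t)) * (2 ^ s * B ^ 3)
        = 16 ^ u * K ^ (2 * u) * (2 * s) ^ (3 * u) * (2 ^ s * B ^ 3 * B ^ (3 * t)) by ring.
have eB : B ^ (3 * s) = B ^ (3 * t) * B ^ (3 * u) by rewrite {1}es mulnDr expnD.
rewrite eK eB.
have -> : (128 * s * K ^ 2) ^ u * s ^ (2 * u) * (2 ^ s * B ^ 3 * B ^ (3 * t))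
        = (128 * s * K ^ 2) ^ u * 2 ^ s * B ^ 3 * (s ^ (2 * u) * B ^ (3 * t)) by ring.
have -> : 1024 * K ^ 2 * (B ^ (3 * t) * B ^ (3 * u)) * s ^ (2 * u)
        = 1024 * K ^ 2 * B ^ (3 * u) * (s ^ (2 * u) * B ^ (3 * t)) by ring.
by rewrite leq_mul2r leq_expn_gain ?orbT.
Qed.

Lemma sum_geometric_leq (a : nat -> nat) Q m :
  (forall i, i < m -> a i * 2 ^ i <= Q) -> \sum_(i < m) a i <= 2 * Q.
Proof.
elim: m a => [|m IH] a aQ; first by rewrite big_ord0.
rewrite big_ord_recl /=.
have a0 : a 0 <= Q by have := aQ 0 isT; rewrite muln1.
have : \sum_(i < m) 2 * a i.+1 <= 2 * Q.
  apply: (IH (fun i => 2 * a i.+1)) => i im.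
  by have := aQ i.+1 im; rewrite expnS mulnCA mulnA.
rewrite -big_distrr leq_pmul2l //= => hsum.
by rewrite mul2n -addnn leq_add.
Qed.

Lemma card_bigcup_leq (I T : finType) (P : pred I) (F : I -> {set T}) :
  #|\bigcup_(i | P i) F i| <= \sum_(i | P i) #|F i|.
Proof.
apply: (big_ind2 (fun (A : {set T}) m => #|A| <= m)) => //; first by rewrite cards0.
by move=> A1 m1 A2 m2 h1 h2; apply: leq_trans (leq_add h1 h2); rewrite cardsU leq_subr.
Qed.

Lemma card_bigcup_leq_const (I T : finType) (D : {set I}) (F : I -> {set T}) m :
  (forall i, i \in D -> #|F i| <= m) -> #|\bigcup_(i in D) F i| <= #|D| * m.
Proof.
by move=> Fm; rewrite -sum_nat_const; apply: leq_trans (card_bigcup_leq _ _) _; apply: leq_sum.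
Qed.

Lemma exists_superset_card (T : finType) (A : {set T}) k :
  #|A| <= k -> k <= #|T| -> exists2 B : {set T}, A \subset B & #|B| = k.
Proof.
elim: k A => [|k IH] A hA hk; first by exists A => //; apply/eqP; rewrite -leqn0.
have [<-|neq] := eqVneq #|A| k.+1; first by exists A.
have hAk : #|A| <= k by rewrite -ltnS ltn_neqAle neq hA.
have [B AB cB] := IH A hAk (ltnW hk).
have /subsetPn [x _ xB] : ~~ ([set: T] \subset B).
  by apply: contraTN hk => /subset_leq_card; rewrite cardsT cB -ltnNge ltnS.
by exists (x |: B); [exact: subset_trans AB (subsetUr _ _) | rewrite cardsU1 xB cB].
Qed.

Lemma card_ffun_forall_in (K : nat) (X : finType) (S : {set 'I_K}) (A : {set X}) :
  #|[set f : {ffun 'I_K -> X} | [forall i in S, f i \in A]]|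
  = #|A| ^ #|S| * #|X| ^ (K - #|S|).
Proof.
pose F i := [pred x : X | (i \notin S) || (x \in A)].
rewrite (@eq_card _ _ (family F)); last first.
  move=> f; rewrite inE; apply/forall_inP/familyP => fA i.
    by rewrite /F inE; case: (boolP (i \in S)) => // /fA.
  by move=> iS; have := fA i; rewrite /F inE iS.
rewrite card_family foldrE big_map big_enum /= (bigID (mem S)) /=.
rewrite [Y in Y * _](eq_bigr (fun _ => #|A|)) => [|i iS]; last first.
  by apply: eq_card => x; rewrite unfold_in /= iS.
rewrite [Y in _ * Y](eq_bigr (fun _ => #|X|)) => [|i iS]; last first.
  by apply: eq_card => x; rewrite unfold_in /= (negbTE iS).
rewrite [Y in _ * Y](eq_bigl (mem (~: S))) => [|i]; last by rewrite !inE.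
by rewrite !prod_nat_const -[K in K - _]card_ord -(cardsC S) addKn.
Qed.

Lemma tnth_hashc n b c (x : n.-tuple bool) (j : 'I_b) :
  tnth (hashc b c x) j = nth false x (c * b + j).
Proof. exact: tnth_mktuple. Qed.

Lemma hashc_drop_inj n b : 3 * b <= n ->
  injective (fun x : n.-tuple bool =>
               (hashc b 0 x, hashc b 1 x, hashc b 2 x, drop_tuple (3 * b) x)).
Proof.
move=> hn x y [e0 e1 e2 e3].
have eh c : c < 3 -> hashc b c x = hashc b c y.
  by case: c => [|[|[|c]]] // _; apply: val_inj.
apply: eq_from_tnth => j; rewrite !(tnth_nth false).
have [jl|jg] := ltnP j (3 * b).
  have b0 : 0 < b by case: b jl {eh e0 e1 e2 e3 hn} => //; rewrite muln0.
  have cl : j %/ b < 3 by rewrite ltn_divLR // mulnC.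
  rewrite (divn_eq j b) -[j %% b]/(nat_of_ord (Ordinal (ltn_pmod j b0))).
  by rewrite -!tnth_hashc eh.
have := congr1 (nth false ^~ (j - 3 * b)) e3.
by rewrite !nth_drop subnKC.
Qed.

Definition blocks_in n b (T0 T1 T2 : {set b.-tuple bool}) : {set n.-tuple bool} :=
  [set x | [&& hashc b 0 x \in T0, hashc b 1 x \in T1 & hashc b 2 x \in T2]].

Lemma card_blocks_in n b (T0 T1 T2 : {set b.-tuple bool}) : 3 * b <= n ->
  #|blocks_in n T0 T1 T2| <= #|T0| * #|T1| * #|T2| * 2 ^ (n - 3 * b).
Proof.
move=> hn; rewrite -(card_imset _ (hashc_drop_inj hn)).
have -> : 2 ^ (n - 3 * b) = #|[set: (n - 3 * b).-tuple bool]|.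
  by rewrite cardsT card_tuple card_bool.
rewrite -!cardsX.
apply/subset_leq_card/subsetP => _ /imsetP [x + ->].
by rewrite !inE => /and3P [-> -> ->].
Qed.

Definition few_nbrs n b K (S : {set 'I_K}) t : {set {ffun 'I_K -> n.-tuple bool}} :=
  [set ks | [forall c : 'I_3, #|nbr b ks c S| <= t]].

Lemma card_few_nbrs n b K (S : {set 'I_K}) t : 3 * b <= n -> t <= 2 ^ b ->
  #|few_nbrs n b S t|
    <= ('C(2 ^ b, t) * t ^ #|S|) ^ 3 * 2 ^ ((n - 3 * b) * #|S| + n * (K - #|S|)).
Proof.
move=> hn tB; set D := [set T : {set b.-tuple bool} | #|T| == t].
(* Padding each N_c(S) to a t-subset makes the union range over a family that
   does not depend on ks. *)
have cD : #|D| = 'C(2 ^ b, t) by rewrite card_draws card_tuple card_bool.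
have cover : few_nbrs n b S t \subset \bigcup_(T0 in D) \bigcup_(T1 in D)
    \bigcup_(T2 in D) [set ks : {ffun 'I_K -> n.-tuple bool} |
                         [forall i in S, ks i \in blocks_in n T0 T1 T2]].
  apply/subsetP => ks; rewrite inE => /forallP few.
  have tT : t <= #|{: b.-tuple bool}| by rewrite card_tuple card_bool.
  have [T0 sub0 c0] := exists_superset_card (few (@Ordinal 3 0 isT)) tT.
  have [T1 sub1 c1] := exists_superset_card (few (@Ordinal 3 1 isT)) tT.
  have [T2 sub2 c2] := exists_superset_card (few (@Ordinal 3 2 isT)) tT.
  apply/bigcupP; exists T0; first by rewrite inE c0.
  apply/bigcupP; exists T1; first by rewrite inE c1.
  apply/bigcupP; exists T2; first by rewrite inE c2.
  rewrite inE; apply/forall_inP => i iS; rewrite inE.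
  by apply/and3P; split;
    [apply: (subsetP sub0) | apply: (subsetP sub1) | apply: (subsetP sub2)]; apply: imset_f.
apply: leq_trans (subset_leq_card cover) _.
have -> : ('C(2 ^ b, t) * t ^ #|S|) ^ 3 * 2 ^ ((n - 3 * b) * #|S| + n * (K - #|S|))
    = #|D| * (#|D| * (#|D| * ((t ^ 3 * 2 ^ (n - 3 * b)) ^ #|S| * (2 ^ n) ^ (K - #|S|)))).
  by rewrite cD expnD !expnMn -!expnM (expnM t #|S| 3); ring.
apply: card_bigcup_leq_const => T0; rewrite inE => /eqP c0.
apply: card_bigcup_leq_const => T1; rewrite inE => /eqP c1.
apply: card_bigcup_leq_const => T2; rewrite inE => /eqP c2.
rewrite card_ffun_forall_in card_tuple card_bool leq_mul2r leq_expn2r ?orbT //.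
by apply: leq_trans (card_blocks_in _ _ _ hn) _; rewrite c0 c1 c2 expnS expnS expn1 !mulnA.
Qed.

Lemma card_not_expander (R : realFieldType) (eps : R) n b K C :
  3 <= C -> 3 * b <= n ->
  (forall s, (s%:R <= eps * K%:R)%R -> 4096 * s * K ^ 2 <= (2 ^ b) ^ 3) ->
  #|~: [set ks : {ffun 'I_K -> n.-tuple bool} | is_expander b C eps ks]| * (2 ^ b) ^ 3
    <= 2048 * K ^ 2 * 2 ^ (n * K).
Proof.
move=> C3 hn hs; set B := 2 ^ b.
pose small s := (0 < s) && (s%:R <= eps * K%:R)%R.
pose bad s := \bigcup_(S in [set S : {set 'I_K} | #|S| == s]) few_nbrs n b S s./2.
pose count s := 'C(K, s) * ('C(B, s./2) * s./2 ^ s) ^ 3 * 2 ^ ((n - 3 * b) * s + n * (K - s)).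
have cover :
    ~: [set ks | is_expander b C eps ks] \subset \bigcup_(s < K.+1 | small s) bad s.
  apply/subsetP => ks; rewrite !inE negb_forall => /existsP [S].
  rewrite negb_imply negb_exists => /andP [/andP [S0 Ssmall] /forallP few].
  have sK : #|S| < K.+1 by rewrite ltnS -[K in _ <= K]card_ord max_card.
  apply/bigcupP; exists (Ordinal sK); first by rewrite /small /= card_gt0 S0.
  apply/bigcupP; exists S; first by rewrite inE.
  rewrite inE; apply/forallP => c; rewrite geq_half_double -mul2n leqNgt.
  exact: few (widen_ord C3 c).
have count_bad s : small s -> s <= K -> #|bad s| <= count s.
  move=> /andP [_ /hs hB] sK.
  have sB : s./2 <= B.
    have hs2 : s./2 <= s by rewrite leq_half_double -addnn; lia.
    apply: leq_trans hs2 _; rewrite -(leq_exp2r _ _ (isT : 0 < 3)).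
    by apply: leq_trans hB; rewrite (expnS s 2) leq_mul //; [lia | apply: leq_expn2r].
  have cD : #|[set S : {set 'I_K} | #|S| == s]| = 'C(K, s).
    by rewrite card_draws card_ord.
  rewrite /count -mulnA -cD.
  apply: card_bigcup_leq_const => S; rewrite inE => /eqP cS.
  by have := card_few_nbrs S hn sB; rewrite cS.
have count_gain s :
    small s -> s <= K -> count s * 2 ^ s * B ^ 3 <= 1024 * K ^ 2 * 2 ^ (n * K).
  move=> /andP [s0 /hs hB] sK.
  have e2 : 2 ^ (n * K) = B ^ (3 * s) * 2 ^ ((n - 3 * b) * s + n * (K - s)).
    by rewrite -expnM -expnD; congr (_ ^ _); nia.
  rewrite e2 /count; set E := 2 ^ _.
  by rewrite (mulnAC _ E) (mulnAC _ E) mulnA leq_mul2r union_term_leq ?orbT.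
apply: leq_trans (leq_mul (subset_leq_card cover) (leqnn _)) _.
apply: leq_trans (leq_mul (card_bigcup_leq _ _) (leqnn _)) _.
apply: (@leq_trans (\sum_(s < K.+1) (if small s then count s * B ^ 3 else 0))).
  rewrite big_distrl big_mkcond /=; apply: leq_sum => s _.
  by case: ifP => // small_s; rewrite leq_mul2r count_bad ?orbT // -ltnS.
pose a s := if small s then count s * B ^ 3 else 0.
apply: leq_trans (@sum_geometric_leq a (1024 * K ^ 2 * 2 ^ (n * K)) _ _) _; last first.
  by rewrite !mulnA.
move=> s sK; rewrite /a; case: ifP => // small_s; rewrite mulnAC count_gain // -ltnS.
Qed.

Local Open Scope ring_scope.

Lemma prob_expanderE (R : realFieldType) (eps : R) n b K C :
  prob_expander n b K C eps
  = 1 - #|~: [set ks : {ffun 'I_K -> n.-tuple bool} | is_expander b C eps ks]|%:R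
          / (2 ^ (n * K))%:R.
Proof.
rewrite /prob_expander; set G := [set ks | _].
have cG : (#|G| + #|~: G|)%N = (2 ^ (n * K))%N.
  by rewrite cardsC card_ffun card_tuple card_bool card_ord expnM.
have N0 : (2 ^ (n * K))%:R != 0 :> R by rewrite pnatr_eq0 expn_eq0.
rewrite -cG card_ffun card_tuple card_bool card_ord -expnM -cG natrD in N0 *.
by field.
Qed.

Theorem lemma4 (R : realFieldType) (delta eta : R) (C : nat) :
  0 < delta -> delta <= 3^-1 -> 0 < eta -> (3 <= C)%N ->
  exists eps : R, 0 < eps /\
  exists M : R, forall n b K : nat,
    (1 <= n)%N -> (0 < b)%N -> b%:R = delta * n%:R ->
    (2 ^ b)%:R = eta * K%:R -> (C * b <= n)%N ->
    1 - M / K%:R <= prob_expander n b K C eps.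
Proof.
move=> _ _ eta0 C3; exists (eta ^+ 3 / 4096); split; first by rewrite divr_gt0 ?exprn_gt0.
exists (2048 / eta ^+ 3) => n b K _ _ _ BK Cbn.
have K0 : 0 < K%:R :> R.
  by rewrite ltr0n lt0n; apply: contra_eqN BK => /eqP->; rewrite mulr0 pnatr_eq0 expn_eq0.
have hn : (3 * b <= n)%N by apply: leq_trans Cbn; rewrite leq_mul2r C3 orbT.
have small s : s%:R <= eta ^+ 3 / 4096 * K%:R -> (4096 * s * K ^ 2 <= (2 ^ b) ^ 3)%N.
  rewrite -(ler_nat R) !natrM BK => hs; rewrite mulrAC.
  rewrite [leRHS](_ : _ = 4096 * (K%:R * K%:R) * (eta ^+ 3 / 4096 * K%:R)); last by field.
  by rewrite ler_wpM2l // !mulr_ge0 // ltW.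
have := card_not_expander C3 hn small.
rewrite -(ler_nat R) !natrM BK -expr2 -(exprS _ 2) prob_expanderE lerD2l lerN2.
set a := #|~: _|%:R; set N := (2 ^ _)%:R => bad.
have N0 : 0 < N by rewrite ltr0n expn_gt0.
rewrite ler_pdivrMr // [leRHS](_ : _ = 2048 * K%:R ^+ 2 * N / (eta * K%:R) ^+ 3).
  by rewrite ler_pdivlMr // exprn_gt0 // mulr_gt0.
by field; rewrite !gt_eqF.
Qed.
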